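(* Let $n\ge 1$, let $A=\{\mathit{pts}_1,\ldots,\mathit{pts}_n\}\subseteq\mathit{PTS}$, and let $\mathit{pts}=\nabla((\mathit{pts}_1,\tfrac1n),\ldots,(\mathit{pts}_n,\tfrac1n))$. Then $\mathit{PTS}$, ordered by the subtyping relation $\le$ (with equality taken to be $\equiv$), is a complete lattice, and $\mathit{pts}$ is the least upper bound $\bigvee A$ of $A$.
   Context: $\mathit{Var}$ is a finite set of program variables. $\mathit{Addrs}=\{x' \mid x\in\mathit{Var}\}$ is a set of symbolic addresses (one per variable) and $\mathit{Addrs}_p=\mathit{Addrs}\times[0,1]$. $\textit{Pre-PTS}$ is the set of maps $\mathit{pts}:\mathit{Var}\to 2^{\mathit{Addrs}_p}$ such that for all $x,y\in\mathit{Var}$, if $(y',p_1),(y',p_2)\in\mathit{pts}(x)$ then $p_1=p_2$. For $\mathit{pts}\in\textit{Pre-PTS}$ and $x\in\mathit{Var}$, $\sum_{\mathit{pts}} x=\sum_{(z',p)\in\mathit{pts}(x)} p$ and $A_{\mathit{pts}}(x)=\{z'\mid \exists p>0.\ (z',p)\in\mathit{pts}(x)\}$. The set of points-to types is $\mathit{PTS}=\{\mathit{pts}\in\textit{Pre-PTS}\mid \forall x\in\mathit{Var}.\ \sum_{\mathit{pts}} x\le 1\}$. Subtyping: $\mathit{pts}\le\mathit{pts}'$ iff $A_{\mathit{pts}}(x)\subseteq A_{\mathit{pts}'}(x)$ for all $x$; equality: $\mathit{pts}\equiv\mathit{pts}'$ iff $A_{\mathit{pts}}(x)=A_{\mathit{pts}'}(x)$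 for all $x$. For $\mathit{pts}_1,\ldots,\mathit{pts}_n\in\mathit{PTS}$ and weights $q_1,\ldots,q_n\in[0,1]$ with sum $\le 1$, $\nabla((\mathit{pts}_1,q_1),\ldots,(\mathit{pts}_n,q_n))(x)=\{(z',p)\mid (\exists i.\ z'\in A_{\mathit{pts}_i}(x))\wedge p=\sum_{k:\ (z',p_k)\in\mathit{pts}_k(x)} q_k\, p_k\}$. *)

From mathcomp Require Import all_boot all_order all_algebra.
From mathcomp Require Import all_classical all_reals.
Import GRing.Theory Num.Theory.
Set Implicit Arguments. Unset Strict Implicit. Unset Printing Implicit Defensive.
Local Open Scope ring_scope.
Local Open Scope classical_set_scope.

(* The symbolic address
   x' of a variable x is represented by x itself (Addrs is in bijection with
   Var via x |-> x'). *)
Definition Addrs (Var : finType) : Type := Var.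

Definition ptsT (R : realType) (Var : finType) := Var -> set (Var * R).

Section PTS.
Variables (R : realType) (Var : finType).
Implicit Types (pts : ptsT R Var).

Definition prePTS pts : Prop :=
  (forall x z p, pts x (z, p) -> 0 <= p <= 1) /\
  (forall x y p1 p2, pts x (y, p1) -> pts x (y, p2) -> p1 = p2).

Definition sum_pts pts (x : Var) : R := \sum_(zp \in pts x) zp.2.

Definition Apts pts (x : Var) : set Var := [set z | exists2 p, 0 < p & pts x (z, p)].

Definition isPTS pts : Prop := prePTS pts /\ forall x, sum_pts pts x <= 1.

Definition subty pts pts' : Prop := forall x, Apts pts x `<=` Apts pts' x.
Definition eqty pts pts' : Prop := forall x, Apts pts x = Apts pts' x.

(* The inner sum over [set p | pts k x (z,p)] is p_k if pts_k(x) contains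
   (z,p_k) (unique by Pre-PTS) and 0 otherwise. *)
Definition nabla (n : nat) (ps : 'I_n -> ptsT R Var) (q : 'I_n -> R) : ptsT R Var :=
  fun x => [set zp | (exists i, Apts (ps i) x zp.1) /\
      zp.2 = \sum_(k < n) q k * (\sum_(p \in [set p | ps k x (zp.1, p)]) p)].

Definition is_lub_pts (S : set (ptsT R Var)) (u : ptsT R Var) : Prop :=
  [/\ isPTS u, (forall s, S s -> subty s u) &
      (forall v, isPTS v -> (forall s, S s -> subty s v) -> subty u v)].

Definition is_glb_pts (S : set (ptsT R Var)) (l : ptsT R Var) : Prop :=
  [/\ isPTS l, (forall s, S s -> subty l s) &
      (forall v, isPTS v -> (forall s, S s -> subty v s) -> subty v l)].

Definition PTS_complete_lattice : Prop :=
  [/\ (forall a, isPTS a -> subty a a),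
      (forall a b c, isPTS a -> isPTS b -> isPTS c ->
          subty a b -> subty b c -> subty a c),
      (forall a b, isPTS a -> isPTS b -> subty a b -> subty b a -> eqty a b),
      (forall S, S `<=` isPTS -> exists u, is_lub_pts S u) &
      (forall S, S `<=` isPTS -> exists l, is_glb_pts S l)].

End PTS.

From mathcomp Require Import all_boot all_order all_algebra.
From mathcomp Require Import all_classical all_reals.
From mathcomp Require Import lra.
Import Order.TTheory GRing.Theory Num.Theory.
Local Open Scope ring_scope.
Local Open Scope classical_set_scope.

(* Subtyping only looks at the supports [Apts pts x], and every family of
   supports is realised by some PTS (give each address a small uniform
   probability), so PTS is a complete lattice with joins and meets computed
   as unions and intersections of supports.  The support of the mixture
   [nabla ps q] with positive weights is the union of the supports of the
   [ps i], because a positive term cannot be cancelled in a sum of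
   nonnegative ones; and it is a PTS since its total mass is the
   [q]-weighted average of the total masses of the [ps i]. *)

Section Weight.
Context {R : realType} {T : finType}.
Implicit Types (P : set (T * R)).

Definition single_valued P := forall z p1 p2, P (z, p1) -> P (z, p2) -> p1 = p2.

(* The inner sum of [nabla]: the probability [P] attaches to [z], or [0] if
   it attaches none. *)
Definition weight P (z : T) : R := \sum_(p \in [set p | P (z, p)]) p.

Lemma weight_eq {P z p} : single_valued P -> P (z, p) -> weight P z = p.
Proof.
move=> Psv Pzp; rewrite /weight.
have -> : [set q | P (z, q)] = [set p].
  by apply/seteqP; split=> q /= => [Pzq | ->] //; exact: Psv Pzq Pzp.
by rewrite fsbig_set1.
Qed.

Lemma weight_eq0 P z : (forall p, ~ P (z, p)) -> weight P z = 0.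
Proof. by move=> nPz; rewrite /weight fsbig1 // => p /nPz. Qed.

Lemma sum_weight P : single_valued P -> \sum_(zp \in P) zp.2 = \sum_z weight P z.
Proof.
move=> Psv; pose D := [set z | exists p, P (z, p)].
have PE : P = (fun z => (z, weight P z)) @` D.
  apply/seteqP; split=> [[z p] Pzp | _ [z [p Pzp] <-]] /=.
    by exists z; [exists p | rewrite (weight_eq Psv Pzp)].
  by rewrite (weight_eq Psv Pzp).
rewrite [in LHS]PE fsbig_image /=; last by move=> ? ? _ _ [].
rewrite (@fsbig_fwiden _ _ _ _ (enum T)) ?enum_uniq ?big_enum //.
  by move=> z _; rewrite /= mem_enum.
by move=> z [_ nDz]; apply: weight_eq0 => p Pzp; apply: nDz; exists p.
Qed.

Lemma weight_itv P z :
  (forall z p, P (z, p) -> 0 <= p <= 1) -> single_valued P -> 0 <= weight P z <= 1.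
Proof.
move=> P01 Psv; have [[p Pzp] | nPz] := pselect (exists p, P (z, p)).
  by rewrite (weight_eq Psv Pzp); exact: P01 Pzp.
by rewrite weight_eq0 ?lexx ?ler01 // => p Pzp; apply: nPz; exists p.
Qed.

End Weight.

Section PointsTo.
Context {R : realType} {Var : finType}.
Implicit Types (pts : ptsT R Var) (S : set (ptsT R Var)).

Lemma isPTS_itv {pts} x z p : isPTS pts -> pts x (z, p) -> 0 <= p <= 1.
Proof. by case=> -[P01 _] _; exact: P01. Qed.

Lemma isPTS_single_valued {pts} x : isPTS pts -> single_valued (pts x).
Proof. by case=> -[_ Psv] _; exact: Psv. Qed.

Lemma isPTS_weight_itv {pts} x z : isPTS pts -> 0 <= weight (pts x) z <= 1.
Proof.
move=> Ppts; apply: weight_itv; last exact: isPTS_single_valued.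
by move=> ? ?; exact: isPTS_itv.
Qed.

Lemma isPTS_sum_weight {pts} x : isPTS pts -> \sum_z weight (pts x) z <= 1.
Proof.
move=> Ppts; rewrite -sum_weight; last exact: isPTS_single_valued.
by case: Ppts => _; exact.
Qed.

Lemma isPTS_graph pts (f : Var -> Var -> R) :
  (forall x z p, pts x (z, p) -> p = f x z) ->
  (forall x z, 0 <= f x z <= 1) -> (forall x, \sum_z f x z <= 1) ->
  isPTS pts.
Proof.
move=> ptsE f01 f_sum.
have Psv x : single_valued (pts x).
  by move=> z p1 p2 /ptsE -> /ptsE ->.
split; first by split=> [x z p /ptsE -> // | x]; exact: Psv.
move=> x; rewrite /sum_pts sum_weight //; apply: le_trans (f_sum x).
apply: ler_sum => z _; have [[p Pzp] | nPz] := pselect (exists p, pts x (z, p)).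
  by rewrite (weight_eq (Psv x) Pzp) (ptsE _ _ _ Pzp).
by rewrite weight_eq0; [case/andP: (f01 x z) | move=> p Pzp; apply: nPz; exists p].
Qed.

(* The [.+1] keeps the probability positive even when [Var] is empty. *)
Definition uniform_pts (A : Var -> set Var) : ptsT R Var :=
  fun x => [set zp | A x zp.1 /\ zp.2 = (#|Var|.+1)%:R^-1].

Lemma Apts_uniform_pts A x : Apts (uniform_pts A) x = A x.
Proof.
apply/seteqP; split=> z /= => [[p _ []] // | Axz].
by exists (#|Var|.+1)%:R^-1; rewrite ?invr_gt0 ?ltr0n.
Qed.

Lemma isPTS_uniform_pts A : isPTS (uniform_pts A).
Proof.
apply: (@isPTS_graph _ (fun _ _ => (#|Var|.+1)%:R^-1)) => [x z p [] // | x z | x].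
  by rewrite invr_ge0 ler0n invf_le1 ?ltr0n // ler1n.
rewrite sumr_const -[_ *+ #|_|]mulr_natl ler_pdivrMr ?ltr0n // mul1r ler_nat.
exact: leqnSn.
Qed.

Lemma is_lub_pts_Apts S u : isPTS u ->
  (forall x, Apts u x = \bigcup_(s in S) Apts s x) -> is_lub_pts S u.
Proof.
move=> Pu uE; split=> // [s Ss x | v _ Sv x]; rewrite uE.
  exact: bigcup_sup Ss.
by apply: bigcup_sub => s Ss; exact: Sv.
Qed.

Lemma is_glb_pts_Apts S l : isPTS l ->
  (forall x, Apts l x = \bigcap_(s in S) Apts s x) -> is_glb_pts S l.
Proof.
move=> Pl lE; split=> // [s Ss x | v _ Sv x]; rewrite lE.
  exact: bigcap_inf Ss.
by apply: sub_bigcap => s Ss; exact: Sv.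
Qed.

Lemma PTS_is_complete_lattice : PTS_complete_lattice R Var.
Proof.
split=> [a _ x // | a b c _ _ _ ab bc x z /ab /bc // | a b _ _ ab ba x | S _ | S _].
- by apply/seteqP; split; [exact: ab | exact: ba].
- exists (uniform_pts (fun x => \bigcup_(s in S) Apts s x)).
  by apply: is_lub_pts_Apts => [|x]; [exact: isPTS_uniform_pts | exact: Apts_uniform_pts].
- exists (uniform_pts (fun x => \bigcap_(s in S) Apts s x)).
  by apply: is_glb_pts_Apts => [|x]; [exact: isPTS_uniform_pts | exact: Apts_uniform_pts].
Qed.

Section Mixture.
Variables (n : nat) (ps : 'I_n -> ptsT R Var) (q : 'I_n -> R).
Hypothesis ps_PTS : forall i, isPTS (ps i).

Definition mixture_weight x z : R := \sum_(k < n) q k * weight (ps k x) z.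

Lemma nablaE x z p :
  nabla ps q x (z, p) <-> (exists i, Apts (ps i) x z) /\ p = mixture_weight x z.
Proof. by []. Qed.

Lemma Apts_nabla x : (forall k, 0 < q k) ->
  Apts (nabla ps q) x = \bigcup_(i in [set: 'I_n]) Apts (ps i) x.
Proof.
move=> q_gt0; apply/seteqP; split=> z /= => [[p _ /nablaE [[i Ai] _]] | [i _ Ai]].
  by exists i.
exists (mixture_weight x z); last by apply/nablaE; split; first exists i.
have [p p_gt0 Pp] := Ai.
have wi_gt0 : 0 < q i * weight (ps i x) z.
  by rewrite mulr_gt0 // (weight_eq (isPTS_single_valued x (ps_PTS i)) Pp).
have rest_ge0 : 0 <= \sum_(k < n | k != i) q k * weight (ps k x) z.
  apply: sumr_ge0 => k _; have /andP[w_ge0 _] := isPTS_weight_itv x z (ps_PTS k).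
  by rewrite mulr_ge0 // ltW.
rewrite /mixture_weight (bigD1 i) //=; lra.
Qed.

Lemma isPTS_nabla : (forall k, 0 <= q k) -> \sum_(k < n) q k <= 1 ->
  isPTS (nabla ps q).
Proof.
move=> q_ge0 q_sum.
have q_weight_le k x z : 0 <= q k * weight (ps k x) z <= q k.
  have /andP[w0 w1] := isPTS_weight_itv x z (ps_PTS k).
  by rewrite mulr_ge0 // ler_piMr.
apply: (@isPTS_graph _ mixture_weight) => [x z p /nablaE [_ ->] // | x z | x].
  rewrite sumr_ge0 /= => [|k _]; last by case/andP: (q_weight_le k x z).
  by apply: le_trans q_sum; apply: ler_sum => k _; case/andP: (q_weight_le k x z).
rewrite exchange_big /=; apply: le_trans q_sum; apply: ler_sum => k _.
rewrite -mulr_sumr ler_piMr //; exact: isPTS_sum_weight.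
Qed.

End Mixture.

End PointsTo.

Theorem lemma2 (R : realType) (Var : finType) (n : nat)
  (ps : 'I_n -> ptsT R Var) :
  (0 < n)%N -> (forall i, isPTS (ps i)) ->
  PTS_complete_lattice R Var /\
  is_lub_pts [set ps i | i in [set: 'I_n]] (nabla ps (fun _ => n%:R^-1)).
Proof.
move=> n_gt0 ps_PTS; split; first exact: PTS_is_complete_lattice.
have inv_n_gt0 : 0 < n%:R^-1 :> R by rewrite invr_gt0 ltr0n.
apply: is_lub_pts_Apts => [|x].
  apply: isPTS_nabla => // [k|]; first exact: ltW.
  by rewrite sumr_const card_ord -[_^-1 *+ n]mulr_natr mulVf // pnatr_eq0 -lt0n.
by rewrite bigcup_image Apts_nabla.
Qed.
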